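(* For every integer $r\geq 3$ and every positive integer $n$, every collection of $n$ matchings, each of size $\lceil \frac{(r+1)n}{2}\rceil$, in an $r$-uniform hypergraph contains a rainbow matching of size at least $n-2^r\sqrt{n}$.
   Context: A hypergraph is $r$-uniform if every edge contains exactly $r$ vertices. A matching is a set of pairwise vertex-disjoint edges. Given a collection (repetitions allowed) of matchings $M_1,\dots,M_n$ in a hypergraph, a matching $M\subseteq \bigcup_{i=1}^n M_i$ is rainbow if there is an injection $\phi:M\to[n]$ such that every edge $e\in M$ belongs to $M_{\phi(e)}$. *)

From mathcomp Require Import all_boot.
From Stdlib Require Import Reals.
Set Implicit Arguments. Unset Strict Implicit. Unset Printing Implicit Defensive.

Definition uniform (V : finType) (r : nat) (H : {set {set V}}) : Prop :=
  forall e, e \in H -> #|e| = r.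

Definition matching (V : finType) (M : {set {set V}}) : Prop :=
  forall e f, e \in M -> f \in M -> e != f -> [disjoint e & f].

Definition rainbow (V : finType) (n : nat) (Ms : 'I_n -> {set {set V}})
    (M : {set {set V}}) : Prop :=
  matching M /\
  M \subset \bigcup_(i < n) Ms i /\
  exists phi : {set V} -> 'I_n,
    {in M &, injective phi} /\ (forall e, e \in M -> e \in Ms (phi e)).

Definition ceil_half (a : nat) : nat := (a.+1 %/ 2)%N.

(* Fix a rainbow matching F of maximum size k and let D be the n - k colours it
   does not use.  By maximality every edge of a colour in D meets the vertex set
   of F, which has only r k vertices, while every matching has at least
   (r + 1) n / 2 edges; hence for each colour i in D at least n - k edges f of F
   are hit by two edges of colour i meeting V(F) only inside f.  If A_i, B_i and
   A_j, B_j are such pairs for the same f and i <> j, then A_i meets B_j, since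
   otherwise exchanging f for A_i and B_j would enlarge F.  Bollobas's set-pairs
   inequality thus bounds the number of colours for a given f by C(2r, r) <= 4^r,
   and double counting gives (n - k)^2 <= 4^r k <= 4^r n. *)

From mathcomp Require Import all_boot.
From Stdlib Require Import Reals.
From mathcomp Require all_order all_algebra.
From mathcomp Require Import zify.
From Stdlib Require Import Classical Lra.
Set Implicit Arguments. Unset Strict Implicit. Unset Printing Implicit Defensive.

(* Kept in a module so that the ring notations of the algebra library do not
   capture the %R scope of the real-valued bound below. *)
Module Bollobas.
Import all_order all_algebra Order.TTheory GRing.Theory Num.Theory.
Local Open Scope ring_scope.

Definition weight (a b : nat) : rat := ('C(a + b, a)%:R)^-1.

Lemma weight_le1 a b : weight a b <= 1.
Proof. by rewrite invf_le1 ?ler1n ?ltr0n bin_gt0 leq_addr. Qed.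

Lemma weight_recr a b : b.+1%:R * weight a b = (a + b.+1)%:R * weight a b.+1.
Proof.
have bin_ne0 m : ('C(a + m, a)%:R : rat) != 0 by rewrite pnatr_eq0 -lt0n bin_gt0 leq_addr.
apply/eqP; rewrite /weight eqr_div ?bin_ne0 //; apply/eqP.
have := mul_bin_down (a + b.+1) a; rewrite addnS /= -addnS addKn => bin_rec.
by rewrite -!natrM bin_rec.
Qed.

Lemma weight_delete (a b N : nat) : (a + b.+1 <= N)%nat ->
  weight a b *+ b.+1 + weight a b.+1 *+ (N - (a + b.+1))%nat = N%:R * weight a b.+1.
Proof.
move=> le_abN; rewrite -!(mulr_natl (weight _ _)) weight_recr natrB // -mulrDl.
by rewrite addrC subrK.
Qed.

Lemma sum_weight_delete (V : finType) (X A B : {set V}) :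
  A :|: B \subset X -> [disjoint A & B] -> B != set0 ->
  \sum_(x in X | x \notin A) weight #|A| #|B :\ x| = #|X|%:R * weight #|A| #|B|.
Proof.
move=> sABX dAB; rewrite -card_gt0; case Bb: #|B| => [//|b] _.
have cardAB : #|A :|: B| = (#|A| + b.+1)%nat.
  by rewrite cardsU (disjoint_setI0 dAB) cards0 subn0 Bb.
rewrite (bigID (mem B)) /=.
rewrite (eq_bigl (mem B)) => [|x]; last first.
  case xB: (x \in B); rewrite ?andbF ?andbT //.
  by rewrite (subsetP sABX) ?inE ?xB ?orbT // (disjointFl dAB xB).
rewrite [s in _ + s](eq_bigl (mem (X :\: (A :|: B)))) => [|x]; last first.
  by rewrite !inE negb_or -andbA andbC.
rewrite (eq_bigr (fun=> weight #|A| b)) => [|x xB]; last first.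
  by move: (cardsD1 x B); rewrite Bb (xB : x \in B) add1n => -[<-].
rewrite [s in _ + s](eq_bigr (fun=> weight #|A| b.+1)) => [|x]; last first.
  rewrite !inE negb_or => /andP [/andP [_ /negbTE xB] _].
  by move: (cardsD1 x B); rewrite Bb xB add0n => <-.
rewrite !sumr_const cardsDS // cardAB Bb weight_delete // -cardAB.
exact: subset_leq_card.
Qed.

Section SetPairSystem.
Variables (V I : finType) (A : I -> {set V}).

Lemma sum_weight_le1_of_empty (B : I -> {set V}) (J : {set I}) i0 :
  i0 \in J -> B i0 = set0 ->
  {in J &, forall i j, i != j -> ~~ [disjoint A i & B j]} ->
  \sum_(i in J) weight #|A i| #|B i| <= 1.
Proof.
move=> i0J B0 cross; rewrite (big_setD1 i0) //= big1 ?addr0 ?weight_le1 // => i.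
case/setD1P=> ne_i_i0 iJ; have := cross i i0 iJ i0J ne_i_i0.
by rewrite B0 -setI_eq0 setI0 eqxx.
Qed.

Theorem bollobas_weighted (B : I -> {set V}) (X : {set V}) (J : {set I}) :
  {in J, forall i, A i :|: B i \subset X} -> {in J, forall i, [disjoint A i & B i]} ->
  {in J &, forall i j, i != j -> ~~ [disjoint A i & B j]} ->
  \sum_(i in J) weight #|A i| #|B i| <= 1.
Proof.
move Xs: #|X| => s; elim: s X J B Xs => [|s IH] X J B Xs sABX dAB cross;
  (have [/exists_inP [i0 i0J /eqP B0] | /exists_inP B_ne0] :=
     boolP [exists i in J, B i == set0];
   first exact: sum_weight_le1_of_empty i0J B0 cross).
  rewrite big1 ?ler01 // => i iJ; case: B_ne0; exists i => //.
  by rewrite -subset0 -(cards0_eq Xs) (subset_trans _ (sABX i iJ)) ?subsetUr.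
have IHx x : x \in X -> \sum_(i in J | x \notin A i) weight #|A i| #|B i :\ x| <= 1.
  move=> xX; rewrite (eq_bigl (mem [set i in J | x \notin A i])) => [|i]; last first.
    by rewrite -topredE /= inE.
  apply: (IH (X :\ x)) => [|i|i|i j]; rewrite ?inE.
  - by move: Xs; rewrite (cardsD1 x) xX => -[].
  - case/andP=> iJ xAi; rewrite subsetD1 !inE eqxx (negbTE xAi) /= andbT.
    by apply: subset_trans (sABX i iJ); rewrite setUS ?subsetDl.
  - by case/andP=> iJ _; apply: disjointWr (subsetDl _ _) (dAB i iJ).
  - move=> /andP [iJ xAi] /andP [jJ _] ne_ij.
    have := cross i j iJ jJ ne_ij; rewrite -!setI_eq0 => /set0Pn [y /setIP [yA yB]].
    apply/set0Pn; exists y; rewrite !inE yA yB andbT.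
    by apply: contraNneq xAi => eyx; rewrite -eyx.
have : \sum_(x in X) \sum_(i in J | x \notin A i) weight #|A i| #|B i :\ x| <= #|X|%:R.
  by apply: le_trans (ler_sum _ IHx) _; rewrite sumr_const.
rewrite (exchange_big_dep (mem J)) => [|x i _ /andP [] //].
rewrite (eq_bigr (fun i => #|X|%:R * weight #|A i| #|B i|)) => [|i iJ]; last first.
  rewrite -sum_weight_delete ?sABX ?dAB //; last by apply: contra_notN B_ne0; exists i.
  by apply: eq_bigl => x; rewrite (iJ : i \in J).
by rewrite -mulr_sumr -[leRHS]mulr1 ler_pM2l // Xs.
Qed.

Corollary bollobas_uniform (a b : nat) (B : I -> {set V}) (J : {set I}) :
  {in J, forall i, #|A i| = a} -> {in J, forall i, #|B i| = b} ->
  {in J, forall i, [disjoint A i & B i]} ->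
  {in J &, forall i j, i != j -> ~~ [disjoint A i & B j]} ->
  (#|J| <= 'C(a + b, a))%nat.
Proof.
move=> cardA cardB dAB cross.
have := bollobas_weighted (X := [set: V]) (fun i _ => subsetT _) dAB cross.
rewrite (eq_bigr (fun=> weight a b)) => [|i iJ]; last by rewrite cardA ?cardB.
by rewrite sumr_const -mulr_natl ler_pdivrMr ?mul1r ?ler_nat // ltr0n bin_gt0 leq_addr.
Qed.
End SetPairSystem.
End Bollobas.

Lemma sum_bool_card (T : finType) (A : {pred T}) (P : pred T) :
  \sum_(x in A) P x = #|[set x in A | P x]|.
Proof.
by rewrite -sum1dep_card big_mkcondr /=; apply: eq_bigr => x _; case: (P x).
Qed.

(* With Reals loaded, [^] on nat denotes [Nat.pow]; [expn] is written explicitly. *)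
Lemma leq_bin_exp2 m k : 'C(m, k) <= expn 2 m.
Proof.
rewrite -{1 2}(card_ord m) -card_draws -(cardsT 'I_m) -card_powerset.
by apply: subset_leq_card; apply/subsetP => A _; rewrite powersetE subsetT.
Qed.

Lemma INR_expn m k : INR (expn m k) = (INR m ^ k)%R.
Proof. by elim: k => [|k IHk] //; rewrite expnS mulnE mult_INR IHk. Qed.

Lemma sqrt_deficit_bound (n k m : nat) :
  (n - k) * (n - k) <= m * m * n -> (INR n - INR m * sqrt (INR n) <= INR k)%R.
Proof.
move=> le_nk.
have [le_n_k | lt_k_n] := leqP n k.
  have := le_INR _ _ (elimT leP le_n_k).
  have := Rmult_le_pos _ _ (pos_INR m) (sqrt_pos (INR n)); lra.
have /le_INR : ((n - k) * (n - k) <= m * m * n)%coq_nat by apply/leP.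
rewrite !mult_INR minus_INR; last by apply/leP; apply: ltnW.
move=> le_sq; suff : (INR n - INR k <= INR m * sqrt (INR n))%R by lra.
apply: Rsqr_incr_0_var; last by apply: Rmult_le_pos; [apply: pos_INR | apply: sqrt_pos].
rewrite /Rsqr (_ : INR m * sqrt (INR n) * (INR m * sqrt (INR n)) =
                   INR m * INR m * (sqrt (INR n) * sqrt (INR n)))%R; last by ring.
by rewrite sqrt_sqrt //; apply: pos_INR.
Qed.

Section Matchings.
Variable V : finType.
Implicit Types (M N : {set {set V}}) (e f : {set V}).

Lemma matchingS M N : M \subset N -> matching N -> matching M.
Proof. by move=> sMN mN e f eM fM; apply: mN; apply: (subsetP sMN). Qed.

Lemma matching_trivIset M : matching M <-> trivIset M.
Proof. by split=> [mM | /trivIsetP]; first apply/trivIsetP. Qed.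

Lemma sum_card_setI_matching M (X : {set V}) :
  matching M -> \sum_(e in M) #|e :&: X| <= #|X|.
Proof.
move=> mM; have cardI e : #|e :&: X| = \sum_(v in X) (v \in e).
  by rewrite sum_bool_card; apply: eq_card => v; rewrite !inE andbC.
rewrite (eq_bigr _ (fun e _ => cardI e)) exchange_big /= -sum1_card.
apply: leq_sum => v _; rewrite sum_bool_card; apply/card_le1_eqP => e f.
rewrite !inE => /andP [eM ve] /andP [fM vf]; case: (eqVneq e f) => // ne_ef.
by rewrite (disjointFr (mM e f eM fM ne_ef) ve) in vf.
Qed.

Lemma cover_setU1 e M : cover (e |: M) = e :|: cover M.
Proof. by rewrite /cover bigcup_setU -/(cover [set e]) cover1. Qed.

Lemma disjoint_cover_setD1 M e f :
  matching M -> f \in M -> e :&: cover M \subset f -> [disjoint e & cover (M :\ f)].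
Proof.
move=> /matching_trivIset mM fM trace_e.
by rewrite coverD1 // -setI_eq0 setIDA setD_eq0.
Qed.
Lemma notin_disjoint_cover M e :
  e != set0 -> [disjoint e & cover M] -> e \notin M.
Proof.
move=> e_ne0 de; apply: contra e_ne0 => eM.
by rewrite -subset0 -(setICr (cover M)) subsetI (bigcup_sup e eM) -disjoints_subset.
Qed.

End Matchings.

Section RainbowColourings.
Variables (V : finType) (n : nat) (Ms : 'I_n -> {set {set V}}).
Implicit Types (F G : {set {set V}}) (phi : {set V} -> 'I_n).

Definition rainbow_by F phi : Prop :=
  [/\ matching F, {in F &, injective phi} & {in F, forall e, e \in Ms (phi e)}].

Lemma rainbow_by_rainbow F phi : rainbow_by F phi -> rainbow Ms F.
Proof.
case=> mF phi_inj F_col; split=> //; split; last by exists phi.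
by apply/subsetP => e eF; apply/bigcupP; exists (phi e); rewrite ?F_col.
Qed.

Lemma rainbow_by_card F phi : rainbow_by F phi -> #|F| <= n.
Proof.
case=> _ phi_inj _; rewrite -(card_in_imset phi_inj).
by apply: leq_trans (max_card _) _; rewrite card_ord.
Qed.

Lemma rainbow_byS F G phi : G \subset F -> rainbow_by F phi -> rainbow_by G phi.
Proof.
move=> sGF [mF phi_inj F_col]; split; first exact: matchingS sGF mF.
  by move=> x y /(subsetP sGF) xF /(subsetP sGF); apply: phi_inj.
by move=> e /(subsetP sGF) /F_col.
Qed.

Lemma imset_eta_setU1 F phi e i :
  e \notin F -> [eta phi with e |-> i] @: (e |: F) = i |: phi @: F.
Proof.
move=> eF; rewrite imsetU1 /= eqxx; congr (_ |: _).
by apply: eq_in_imset => x xF /=; rewrite ifN //; apply: contraNneq eF => <-.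
Qed.

Lemma rainbow_by_setU1 F phi i e :
  rainbow_by F phi -> e \in Ms i -> i \notin phi @: F ->
  e != set0 -> [disjoint e & cover F] ->
  rainbow_by (e |: F) [eta phi with e |-> i].
Proof.
move=> [mF phi_inj F_col] eMi iF e_ne0 de; have eF := notin_disjoint_cover e_ne0 de.
split.
- apply/matching_trivIset; rewrite trivIsetU ?trivIset1 ?cover1 //.
  exact/matching_trivIset.
- apply/imset_injP; rewrite imset_eta_setU1 // !cardsU1 iF eF.
  by rewrite (card_in_imset phi_inj).
- move=> x /setU1P [-> | xF] /=; first by rewrite eqxx.
  by rewrite ifN ?F_col //; apply: contraNneq eF => <-.
Qed.

Lemma exists_maximum_rainbow_by : 0 < n ->
  exists F phi, rainbow_by F phi /\ forall G psi, rainbow_by G psi -> #|G| <= #|F|.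
Proof.
move=> n_gt0; have empty : rainbow_by set0 (fun=> Ordinal n_gt0).
  by split=> [e f|e f|e]; rewrite inE.
suff grow k F phi : rainbow_by F phi -> n - #|F| <= k ->
    exists F phi, rainbow_by F phi /\ forall G psi, rainbow_by G psi -> #|G| <= #|F|.
  by apply: grow empty _; rewrite cards0 subn0.
elim: k F phi => [|k IHk] F phi Fr le_k;
  have [[G [psi [Gr lt_FG]]] | no_larger] :=
    classic (exists G psi, rainbow_by G psi /\ #|F| < #|G|);
  try by exists F, phi; split=> // G psi Gr; rewrite leqNgt;
         apply/negP => lt_FG; apply: no_larger; exists G, psi.
- by have := rainbow_by_card Gr; lia.
- by apply: (IHk G psi Gr); have := rainbow_by_card Gr; lia.
Qed.
End RainbowColourings.

Section MaximumRainbowMatching.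
Variables (V : finType) (r n : nat) (Ms : 'I_n -> {set {set V}}).
Hypothesis r_gt0 : 0 < r.
Hypothesis Ms_uniform : forall i, {in Ms i, forall e : {set V}, #|e| = r}.
Hypothesis Ms_matching : forall i, matching (Ms i).
Hypothesis Ms_large : forall i, (r + 1) * n <= 2 * #|Ms i|.
Variables (F : {set {set V}}) (phi : {set V} -> 'I_n).
Hypothesis F_rainbow : rainbow_by Ms F phi.
Hypothesis F_maximum : forall G psi, rainbow_by Ms G psi -> #|G| <= #|F|.

Definition unused_colours := ~: (phi @: F).

Lemma card_unused_colours : #|unused_colours| = n - #|F|.
Proof.
have [_ phi_inj _] := F_rainbow.
by rewrite -[n in RHS]card_ord -(cardsC (phi @: F)) (card_in_imset phi_inj) addKn.
Qed.

Lemma edge_neq0 i e : e \in Ms i -> e != set0.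
Proof. by move=> /Ms_uniform; rewrite -card_gt0 => ->. Qed.

Lemma unused_edge_meets_cover i e :
  i \in unused_colours -> e \in Ms i -> e :&: cover F != set0.
Proof.
rewrite inE => iF eMi; rewrite setI_eq0; apply/negP => de.
have := F_maximum (rainbow_by_setU1 F_rainbow eMi iF (edge_neq0 eMi) de).
by rewrite cardsU1 (notin_disjoint_cover (edge_neq0 eMi) de) add1n ltnn.
Qed.

Lemma unused_edges_meet f i j e1 e2 :
  f \in F -> i \in unused_colours -> j \in unused_colours -> i != j ->
  e1 \in Ms i -> e2 \in Ms j ->
  e1 :&: cover F \subset f -> e2 :&: cover F \subset f -> ~~ [disjoint e1 & e2].
Proof.
move=> fF; rewrite !inE => iF jF ne_ij e1Mi e2Mj trace1 trace2; apply/negP => d12.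
have [mF _ _] := F_rainbow; set G := F :\ f.
have sGF : G \subset F := subD1set F f.
have colours_G k : k \notin phi @: F -> k \notin phi @: G.
  by apply: contra; apply/subsetP/imsetS.
have d2 := disjoint_cover_setD1 mF fF trace2.
have e2G := notin_disjoint_cover (edge_neq0 e2Mj) d2.
have G2 := rainbow_by_setU1 (rainbow_byS sGF F_rainbow) e2Mj (colours_G j jF)
                            (edge_neq0 e2Mj) d2.
have d1 : [disjoint e1 & cover (e2 |: G)].
  rewrite cover_setU1 -setI_eq0 setIUr (disjoint_setI0 d12).
  by rewrite (disjoint_setI0 (disjoint_cover_setD1 mF fF trace1)) setU0.
have i_new : i \notin [eta phi with e2 |-> j] @: (e2 |: G).
  by rewrite imset_eta_setU1 // !inE negb_or ne_ij colours_G.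
have := F_maximum (rainbow_by_setU1 G2 e1Mi i_new (edge_neq0 e1Mi) d1).
rewrite !cardsU1 (notin_disjoint_cover (edge_neq0 e1Mi) d1) e2G.
by rewrite (cardsD1 f F) fF !add1n ltnn.
Qed.

Definition pendant i := [set e in Ms i | #|e :&: cover F| == 1].
Definition pendant_at i (f : {set V}) := [set e in pendant i | ~~ [disjoint e & f]].
Definition heavy i := [set f in F | 1 < #|pendant_at i f|].

Lemma F_uniform : {in F, forall f : {set V}, #|f| = r}.
Proof. by have [_ _ F_col] := F_rainbow; move=> f /F_col /Ms_uniform. Qed.

Lemma card_cover_le : #|cover F| <= r * #|F|.
Proof.
apply: leq_trans (leq_card_cover F).1 _.
by rewrite (eq_bigr _ F_uniform) sum_nat_const mulnC.
Qed.

Lemma card_pendant_ge i :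
  i \in unused_colours -> (r + 1) * n <= #|pendant i| + r * #|F|.
Proof.
move=> iF; apply: leq_trans (Ms_large i) _.
pose hits e := #|e :&: cover F|.
apply: leq_trans (_ : \sum_(e in Ms i) (hits e + (hits e == 1)) <= _).
  rewrite mulnC -sum_nat_const; apply: leq_sum => e eMi.
  by have := unused_edge_meets_cover iF eMi; rewrite -card_gt0 /hits; case: #|_| => [|[]].
rewrite big_split /= sum_bool_card addnC leq_add // /hits.
exact: leq_trans (sum_card_setI_matching _ (@Ms_matching i)) card_cover_le.
Qed.

Lemma pendant_atP i f e :
  e \in pendant_at i f -> [/\ e \in Ms i, #|e :&: cover F| = 1 & ~~ [disjoint e & f]].
Proof. by rewrite !inE => /andP [/andP [-> /eqP ->] ->]. Qed.

Lemma pendant_at_trace i f e : f \in F -> e \in pendant_at i f -> e :&: cover F \subset f.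
Proof.
move=> fF /pendant_atP [_ /eqP/cards1P [x trace_e]].
rewrite -setI_eq0 => /set0Pn [v /setIP [ve vf]].
have : v \in e :&: cover F by rewrite inE ve; apply/bigcupP; exists f.
by rewrite trace_e sub1set => /set1P <-.
Qed.

Lemma card_pendant_at_le i f : f \in F -> #|pendant_at i f| <= r.
Proof.
move=> fF; rewrite -(F_uniform fF) -sum1_card.
have sub_Mi : pendant_at i f \subset Ms i by apply/subsetP => e /pendant_atP [].
apply: leq_trans (sum_card_setI_matching f (matchingS sub_Mi (@Ms_matching i))).
by apply: leq_sum => e /pendant_atP [_ _]; rewrite -setI_eq0 -card_gt0.
Qed.

Lemma card_pendant_le_sum i : #|pendant i| <= \sum_(f in F) #|pendant_at i f|.
Proof.
have card_at f : #|pendant_at i f| = \sum_(e in pendant i) ~~ [disjoint e & f].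
  by rewrite sum_bool_card.
rewrite (eq_bigr _ (fun f _ => card_at f)) exchange_big /= -sum1_card.
apply: leq_sum => e; rewrite inE => /andP [_ /eqP trace1].
have [v /setIP [ve /bigcupP [f fF vf]]] : exists v, v \in e :&: cover F.
  by apply/set0Pn; rewrite -card_gt0 trace1.
have meet : ~~ [disjoint e & f].
  by rewrite -setI_eq0; apply/set0Pn; exists v; rewrite inE ve.
by rewrite (bigD1 f) //= meet; apply: leq_addr.
Qed.

Lemma card_pendant_le i : #|pendant i| <= #|F| + (r - 1) * #|heavy i|.
Proof.
apply: leq_trans (card_pendant_le_sum i) _.
rewrite /heavy -sum_bool_card -sum1_card big_distrr /= -big_split /=.
apply: leq_sum => f fF; have := card_pendant_at_le i fF.
by case: ltnP => [_ | le1 _]; rewrite ?muln1 ?muln0 ?addn0 ?subnKC.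
Qed.

Lemma card_heavy_ge i : i \in unused_colours -> n - #|F| <= #|heavy i|.
Proof. by move=> iF; have := card_pendant_ge iF; have := card_pendant_le i; nia. Qed.

Lemma card_heavy_colours_le f :
  f \in F -> #|[set i in unused_colours | f \in heavy i]| <= 'C(r + r, r).
Proof.
move=> fF.
pose A i := odflt set0 [pick e in pendant_at i f].
pose B i := odflt set0 [pick e in pendant_at i f :\ A i].
have AB i : i \in [set i in unused_colours | f \in heavy i] ->
    [/\ i \in unused_colours, A i \in pendant_at i f, B i \in pendant_at i f
       & A i != B i].
  case/setIdP=> iF /setIdP [_ many].
  have Ai : A i \in pendant_at i f.
    by rewrite /A; case: pickP => [//|none]; rewrite (eq_card0 none) in many.
  have : B i \in pendant_at i f :\ A i.
    rewrite /B; case: pickP => [//|none].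
    by move: many; rewrite (cardsD1 (A i)) Ai (eq_card0 none).
  by case/setD1P=> ne_BA Bi; split; rewrite // eq_sym.
apply: (Bollobas.bollobas_uniform (A := A) (B := B)) => [i|i|i|i j].
- by case/AB=> _ /pendant_atP [/Ms_uniform].
- by case/AB=> _ _ /pendant_atP [/Ms_uniform].
- by case/AB=> _ /pendant_atP [Ai _ _] /pendant_atP [Bi _ _]; apply: Ms_matching Ai Bi.
- case/AB=> iF Ai _ _ /AB [jF _ Bj _] ne_ij.
  have [Ai_col _ _] := pendant_atP Ai; have [Bj_col _ _] := pendant_atP Bj.
  exact: unused_edges_meet fF iF jF ne_ij Ai_col Bj_col
         (pendant_at_trace fF Ai) (pendant_at_trace fF Bj).
Qed.

Theorem maximum_rainbow_deficit : (n - #|F|) * (n - #|F|) <= 'C(r + r, r) * #|F|.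
Proof.
apply: leq_trans (_ : \sum_(i in unused_colours) #|heavy i| <= _).
  rewrite -{1}card_unused_colours -sum_nat_const.
  by apply: leq_sum => i /card_heavy_ge.
have card_heavy i : #|heavy i| = \sum_(f in F) (f \in heavy i).
  by rewrite sum_bool_card; apply: eq_card => f; rewrite !inE andbA andbb.
rewrite (eq_bigr _ (fun i _ => card_heavy i)) exchange_big /= mulnC -sum_nat_const.
by apply: leq_sum => f fF; rewrite sum_bool_card card_heavy_colours_le.
Qed.
End MaximumRainbowMatching.

Lemma leq_double_ceil_half a : a <= 2 * ceil_half a.
Proof. rewrite /ceil_half; lia. Qed.

Theorem lemma2p6 (r n : nat) (V : finType) (H : {set {set V}})
    (Ms : 'I_n -> {set {set V}}) :
  (3 <= r)%N -> (0 < n)%N ->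
  uniform r H ->
  (forall i, Ms i \subset H) ->
  (forall i, matching (Ms i)) ->
  (forall i, #|Ms i| = ceil_half ((r + 1) * n)) ->
  exists M : {set {set V}},
    rainbow Ms M /\
    (INR n - 2 ^ r * sqrt (INR n) <= INR #|M|)%R.
Proof.
move=> r_ge3 n_gt0 H_uniform Ms_sub Ms_matching Ms_card.
have r_gt0 : 0 < r by apply: leq_trans r_ge3.
have Ms_uniform i : {in Ms i, forall e : {set V}, #|e| = r}.
  by move=> e /(subsetP (Ms_sub i)) /H_uniform.
have Ms_large i : (r + 1) * n <= 2 * #|Ms i| by rewrite Ms_card leq_double_ceil_half.
have [F [phi [F_rainbow F_maximum]]] := exists_maximum_rainbow_by Ms n_gt0.
exists F; split; first exact: rainbow_by_rainbow F_rainbow.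
have -> : (2 ^ r = INR (expn 2 r))%R by rewrite INR_expn.
apply: sqrt_deficit_bound; rewrite -expnD.
apply: leq_trans
  (maximum_rainbow_deficit r_gt0 Ms_uniform Ms_matching Ms_large F_rainbow F_maximum) _.
by rewrite leq_mul ?leq_bin_exp2 ?(rainbow_by_card F_rainbow).
Qed.
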